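(* Let $X,Y\subseteq\mathbb{P}^n$ be real closed subschemes such that $X\cap Y=\operatorname{Span}(X)\cap\operatorname{Span}(Y)$. Let $f\in\mathbb{R}[X\cup Y]_2$ and suppose that the restrictions $f|_X\in\mathbb{R}[X]_2$ and $f|_Y\in\mathbb{R}[Y]_2$ are each a sum of at most $r$ squares of linear forms in $\mathbb{R}[X]$ and $\mathbb{R}[Y]$ respectively. Then $f$ is a sum of at most $r$ squares of linear forms in $\mathbb{R}[X\cup Y]$.
   Context: For a subscheme $Z\subseteq\mathbb{P}^n$ with homogeneous ideal $I(Z)\subseteq\mathbb{R}[x_0,\dots,x_n]$, $\mathbb{R}[Z]=\mathbb{R}[x_0,\dots,x_n]/I(Z)$; $X\cup Y$ is defined by $I(X)\cap I(Y)$, and restriction maps $\mathbb{R}[X\cup Y]\to\mathbb{R}[X]$, $\mathbb{R}[X\cup Y]\to\mathbb{R}[Y]$ are the natural quotient maps. $\operatorname{Span}(Z)$ is the smallest projective linear subspace containing $Z$. *)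

From HB Require Import structures.
From mathcomp Require Import all_boot all_order all_algebra.
Set Implicit Arguments. Unset Strict Implicit. Unset Printing Implicit Defensive.
Import Order.TTheory GRing.Theory Num.Theory.
Local Open Scope ring_scope.

Section MPoly.
Variable R : rcfType.

(* mpoly n = R[x_1, ..., x_n], built as iterated univariate polynomials:
   mpoly 0 = R, mpoly (k+1) = (mpoly k)[x_{k+1}]. *)
Fixpoint mpoly (n : nat) : comNzRingType :=
  match n with
  | 0%N => R
  | k.+1 => ({poly mpoly k} : comNzRingType)
  end.

(* homog n d f : f is homogeneous of total degree d (0 is homogeneous of
   every degree). *)
Fixpoint homog (n : nat) : nat -> mpoly n -> bool :=
  match n return nat -> mpoly n -> bool with
  | 0%N => fun d c => (d == 0%N) || (c == 0)
  | k.+1 => fun d (p : {poly mpoly k}) =>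
      [forall i : 'I_(size p),
         if (i <= d)%N then homog (d - i) p`_i else p`_i == 0]
  end.

Variable n : nat.
Local Notation S := (mpoly n).

Definition is_ideal (I : S -> Prop) : Prop :=
  [/\ I 0, (forall a b, I a -> I b -> I (a + b)) & (forall a b, I b -> I (a * b))].

Definition is_homog_ideal (I : S -> Prop) : Prop :=
  is_ideal I /\
  forall f, I f -> exists (N : nat) (g : nat -> S),
      f = \sum_(d < N) g d /\ forall d, (d < N)%N -> homog d (g d) /\ I (g d).

(* saturation (J : m^oo) with respect to the irrelevant ideal m = (x_1..x_n):
   f is in it iff m^k f is contained in J for some k, i.e. g f \in J for all
   forms g of degree k. *)
Definition saturation (J : S -> Prop) (f : S) : Prop :=
  exists k : nat, forall g, homog k g -> J (g * f).

Definition is_saturated (J : S -> Prop) : Prop :=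
  forall f, saturation J f -> J f.

(* ideal of a closed subscheme of P^(n-1): a saturated homogeneous ideal *)
Definition is_scheme_ideal (I : S -> Prop) : Prop :=
  is_homog_ideal I /\ is_saturated I.

Definition ideal_sum (I J : S -> Prop) (f : S) : Prop :=
  exists a b, [/\ I a, J b & f = a + b].

Definition ideal_gen (L : S -> Prop) (f : S) : Prop :=
  exists (m : nat) (a b : 'I_m -> S),
    (forall j, L (b j)) /\ f = \sum_(j < m) a j * b j.

(* ideal of Span(Z): generated by the linear forms in I(Z) *)
Definition span_ideal (I : S -> Prop) : S -> Prop :=
  ideal_gen (fun l => I l /\ homog 1 l).

(* ideal of Span(X) cap Span(Y) *)
Definition span_cap_ideal (I J : S -> Prop) : S -> Prop :=
  ideal_gen (fun l => (I l \/ J l) /\ homog 1 l).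

(* the class of q in R[Z] = S/I(Z) is a sum of at most r squares of
   linear forms of R[Z] *)
Definition sos_linear_mod (I : S -> Prop) (r : nat) (q : S) : Prop :=
  exists l : 'I_r -> S,
    (forall i, homog 1 (l i)) /\ I (q - \sum_(i < r) l i ^+ 2).

End MPoly.

From HB Require Import structures.
From mathcomp Require Import all_boot all_order all_algebra.
From mathcomp Require Import ring zify.
From Stdlib Require Import Classical.
Import Order.TTheory GRing.Theory Num.Theory.
Set Implicit Arguments. Unset Strict Implicit. Unset Printing Implicit Defensive.
Local Open Scope ring_scope.

(* Write f|_X = sum_i l_i^2 and f|_Y = sum_i m_i^2, with coefficient matrices Lam
   and Mu.  At every point x of Span(X) cap Span(Y) = X cap Y both sums compute f,
   so |Lam x| = |Mu x| there; by polarization and Witt's theorem some orthogonal O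
   has Lam x = O Mu x on that subspace.  Each row of Lam - O Mu is then a linear form
   vanishing on Span(X) cap Span(Y), hence a sum a_i + b_i of forms vanishing on
   Span(X) and on Span(Y).  The forms h_i = l_i - a_i = (O m)_i + b_i give
   sum h_i^2 = sum l_i^2 on X and sum h_i^2 = sum (O m)_i^2 = sum m_i^2 on Y. *)

Section Coordinates.
Variable R : rcfType.

(* The variable of index [k] is sent to [v k]. *)
Fixpoint meval (m : nat) (v : nat -> R) : {rmorphism mpoly R m -> R} :=
  match m return {rmorphism mpoly R m -> R} with
  | 0%N => idfun
  | k.+1 => horner_morph (fun a => mulrC (v k) (meval k v a))
  end.

Fixpoint mpolyC (m : nat) : {rmorphism R -> mpoly R m} :=
  match m return {rmorphism R -> mpoly R m} with
  | 0%N => idfun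
  | k.+1 => (polyC \o mpolyC k)%FUN
  end.

(* The variable of index [j]; junk value [0] when [m <= j]. *)
Fixpoint mvar (m : nat) : nat -> mpoly R m :=
  match m return nat -> mpoly R m with
  | 0%N => fun _ => 0
  | k.+1 => fun j => if j == k then 'X else (mvar k j)%:P
  end.

Definition linform m (c : nat -> R) : mpoly R m :=
  \sum_(j < m) mpolyC m (c j) * mvar m j.

Lemma mevalS k v (p : mpoly R k.+1) : meval k.+1 v p = (map_poly (meval k v) p).[v k].
Proof. by []. Qed.

Lemma meval_mpolyC m v a : meval m v (mpolyC m a) = a.
Proof. by elim: m => [//|k IH]; rewrite mevalS /= map_polyC hornerC. Qed.

Lemma meval_mvar m v j : (j < m)%N -> meval m v (mvar m j) = v j.
Proof.
elim: m => [//|k IH] ltjk; rewrite mevalS /=.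
have [->|neq_jk] := eqVneq j k; first by rewrite map_polyX hornerX.
by rewrite map_polyC hornerC; apply: IH; rewrite ltn_neqAle neq_jk -ltnS.
Qed.

Lemma meval_linform m v c : meval m v (linform m c) = \sum_(j < m) c j * v j.
Proof.
rewrite rmorph_sum; apply: eq_bigr => j _.
by rewrite rmorphM meval_mpolyC meval_mvar.
Qed.

Lemma linformS k c : linform k.+1 c = (linform k c)%:P + (mpolyC k (c k))%:P * 'X.
Proof.
rewrite /linform big_ord_recr /= eqxx rmorph_sum; congr (_ + _).
by apply: eq_bigr => j _; rewrite (ltn_eqF (ltn_ord j)) rmorphM.
Qed.

Lemma homog0 m d : homog d (0 : mpoly R m).
Proof.
case: m => [|k] /=; first by rewrite eqxx orbT.
by apply/forallP => -[i]; rewrite size_poly0.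
Qed.

Lemma homogP k d (p : mpoly R k.+1) :
  reflect (forall i, if (i <= d)%N then homog (d - i) p`_i else p`_i == 0) (homog d p).
Proof.
apply: (iffP forallP) => [hp i|hp i]; last exact: hp.
have [lti|] := ltnP i (size p); first exact: (hp (Ordinal lti)).
by move=> /(nth_default 0) ->; case: ifP => // _; apply: homog0.
Qed.

Lemma homog_polyC k d (c : mpoly R k) : homog d c -> homog d (c%:P : mpoly R k.+1).
Proof.
move=> hc; apply/homogP => -[|i]; rewrite coefC /= ?subn0 //.
by case: ifP => _ //; apply: homog0.
Qed.

Lemma homog_mpolyC m a : homog 0 (mpolyC m a).
Proof. by elim: m => [//|k IH]; apply: homog_polyC. Qed.

Lemma homog0P m (c : mpoly R m) : homog 0 c -> exists a, c = mpolyC m a.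
Proof.
elim: m c => [|k IH] c; first by exists c.
move/homogP => hc; have [a eq_c0] := IH _ (hc 0%N); exists a.
apply/polyP => -[|i]; rewrite /= coefC -?eq_c0 //.
exact/eqP/(hc i.+1).
Qed.

Lemma homog_mvarX m j e : (j < m)%N -> homog e (mvar m j ^+ e).
Proof.
elim: m => [//|k IH] ltjk /=.
have [_|neq_jk] := eqVneq j k; last first.
  by rewrite -rmorphXn; apply/homog_polyC/IH; rewrite ltn_neqAle neq_jk -ltnS.
apply/homogP => i; rewrite coefXn.
case: ltngtP => [|//|->]; first by move=> _; apply: homog0.
by rewrite subnn -(rmorph1 (mpolyC k)) homog_mpolyC.
Qed.

Lemma homog_linform m c : homog 1 (linform m c).
Proof.
elim: m => [|k IH]; first by rewrite /linform big_ord0 homog0.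
apply/homogP; rewrite linformS => -[|[|i]];
  by rewrite coefD coefC coefMX coefC /= ?addr0 ?add0r ?homog_mpolyC.
Qed.

Lemma homog1P m (l : mpoly R m) : homog 1 l -> exists c, l = linform m c.
Proof.
elim: m l => [|k IH] l.
  by move=> /= /eqP ->; exists (fun _ => 0); rewrite /linform big_ord0.
move/homogP => hl.
have [c0 eq_l0] := IH _ (hl 0%N).
have [a eq_l1] := homog0P (hl 1%N).
exists (fun j => if j == k then a else c0 j); rewrite linformS eqxx.
have -> : linform k (fun j => if j == k then a else c0 j) = linform k c0.
  by apply: eq_bigr => j _; rewrite (ltn_eqF (ltn_ord j)).
apply/polyP => -[|[|i]]; rewrite coefD coefC coefMX coefC /= ?addr0 ?add0r //.
exact/eqP/(hl i.+2).
Qed.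
End Coordinates.

Arguments mpolyC {R} m.
Arguments mvar {R} m j.

Section InnerProduct.
Variable R : rcfType.

Definition dot r (u v : 'rV[R]_r) : R := (u *m v^T) 0 0.

Lemma dotE r (u v : 'rV[R]_r) : dot u v = \sum_j u 0 j * v 0 j.
Proof. by rewrite /dot mxE; apply: eq_bigr => j _; rewrite mxE. Qed.

Lemma mul_rV_trmx r (u v : 'rV[R]_r) : u *m v^T = (dot u v)%:M.
Proof. exact: mx11_scalar. Qed.

Lemma dotC r (u v : 'rV[R]_r) : dot u v = dot v u.
Proof. by rewrite !dotE; apply: eq_bigr => j _; rewrite mulrC. Qed.

Lemma dotDl r (u v w : 'rV[R]_r) : dot (u + v) w = dot u w + dot v w.
Proof. by rewrite !dotE -big_split; apply: eq_bigr => j _; rewrite !mxE mulrDl. Qed.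

Lemma dotBl r (u v w : 'rV[R]_r) : dot (u - v) w = dot u w - dot v w.
Proof. by rewrite !dotE -sumrB; apply: eq_bigr => j _; rewrite !mxE mulrBl. Qed.

Lemma dotZl r a (u w : 'rV[R]_r) : dot (a *: u) w = a * dot u w.
Proof. by rewrite !dotE mulr_sumr; apply: eq_bigr => j _; rewrite !mxE mulrA. Qed.

Lemma dotDr r (u v w : 'rV[R]_r) : dot w (u + v) = dot w u + dot w v.
Proof. by rewrite dotC dotDl !(dotC w). Qed.

Lemma dotBr r (u v w : 'rV[R]_r) : dot w (u - v) = dot w u - dot w v.
Proof. by rewrite dotC dotBl !(dotC w). Qed.

Lemma dotmx_eq0 r (u : 'rV[R]_r) : dot u u = 0 -> u = 0.
Proof.
rewrite dotE => /eqP; rewrite psumr_eq0 => [/allP sq0|j _]; last by rewrite -expr2 sqr_ge0.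
apply/rowP => j; rewrite mxE; apply/eqP.
by move: (sq0 j (mem_index_enum j)) => /implyP/(_ isT); rewrite mulf_eq0 orbb.
Qed.

Lemma dot_mulmx r (O : 'M[R]_r) (u v : 'rV[R]_r) :
  O *m O^T = 1%:M -> dot (u *m O) (v *m O) = dot u v.
Proof. by move=> orthoO; rewrite /dot trmx_mul mulmxA -(mulmxA u) orthoO mulmx1. Qed.

Lemma dot_row_trmx r m (x : 'rV[R]_r) (A : 'M[R]_(m, r)) i : (x *m A^T) 0 i = dot (row i A) x.
Proof. by rewrite dotE mxE; apply: eq_bigr => j _; rewrite !mxE mulrC. Qed.

(* The reflection in the hyperplane orthogonal to [y - z]. *)
Lemma reflection_swap r (y z : 'rV[R]_r) : dot y y = dot z z ->
  exists H : 'M[R]_r,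
    [/\ H *m H^T = 1%:M, y *m H = z & forall v, dot v (y - z) = 0 -> v *m H = v].
Proof.
move=> eq_yz; set u := y - z.
have [u0|u_neq0] := eqVneq u 0.
  exists 1%:M; split=> [||v _]; rewrite ?trmx1 ?mulmx1 //.
  by apply/eqP; rewrite -subr_eq0 -/u u0.
have duu_neq0 : dot u u != 0 by apply: contra_neq u_neq0; apply: dotmx_eq0.
pose a := 2 / dot u u; pose H : 'M[R]_r := 1%:M - a *: (u^T *m u).
have vH v : v *m H = v - (a * dot v u) *: u.
  by rewrite mulmxBr mulmx1 -scalemxAr mulmxA mul_rV_trmx mul_scalar_mx scalerA.
have duu : dot u u = 2 * dot y u by rewrite /u dotBl !dotBr eq_yz (dotC z y); ring.
have HH : H *m H = 1%:M.
  apply/row_matrixP => i; rewrite -{1}[H]mul1mx !row_mul !vH dotBl dotZl.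
  have -> : a * dot (row i 1%:M) u * dot u u = 2 * dot (row i 1%:M) u.
    by rewrite mulrAC /a mulfVK.
  by apply/rowP => j; rewrite !mxE; ring.
exists H; split.
- suff -> : H^T = H by [].
  by rewrite /H linearB /= trmx1 linearZ /= trmx_mul trmxK.
- have dyu_neq0 : dot y u != 0.
    by move: duu_neq0; rewrite duu mulf_eq0 negb_or => /andP[].
  rewrite vH.
  have -> : a * dot y u = 1 by rewrite /a duu; field.
  by rewrite scale1r /u opprB addrC subrK.
- by move=> v vu0; rewrite vH vu0 mulr0 scale0r subr0.
Qed.

Lemma dot_polar r (u v : 'rV[R]_r) :
  dot u v = (dot (u + v) (u + v) - dot u u - dot v v) / 2.
Proof. by rewrite dotDl !dotDr (dotC v u); field. Qed.

Lemma dot_trmx_eq0 k r (M : 'M[R]_(k, r)) x c :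
  x *m M^T = 0 -> (c <= M)%MS -> dot c x = 0.
Proof.
move=> xM0 /submxP[w ->]; rewrite /dot -mulmxA.
by rewrite -[M]trmxK -trmx_mul xM0 trmx0 mulmx0 mxE.
Qed.

Lemma gram_eq_orthogonal r K (p q : 'I_K -> 'rV[R]_r) :
  (forall i j, dot (p i) (p j) = dot (q i) (q j)) ->
  exists O : 'M[R]_r, O *m O^T = 1%:M /\ forall j, p j *m O = q j.
Proof.
move=> gram_pq.
suff : forall k, (k <= K)%N -> exists O : 'M[R]_r,
    O *m O^T = 1%:M /\ forall j : 'I_K, (j < k)%N -> p j *m O = q j.
  by move=> /(_ K (leqnn K)) [O [orthoO pOq]]; exists O; split=> // j; apply: pOq.
elim=> [_|k IH ltkK]; first by exists 1%:M; rewrite trmx1 mulmx1.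
have [O [orthoO pOq]] := IH (ltnW ltkK).
pose jk := Ordinal ltkK.
have [|H [orthoH pH fixH]] := @reflection_swap _ (p jk *m O) (q jk).
  by rewrite dot_mulmx // gram_pq.
exists (O *m H); split=> [|j].
  by rewrite trmx_mul mulmxA -(mulmxA O) orthoH mulmx1 orthoO.
rewrite ltnS leq_eqVlt => /orP[/eqP eq_jk|ltjk].
  have -> : j = jk by apply: val_inj.
  by rewrite mulmxA.
by rewrite mulmxA pOq // fixH // dotBr -{1}(pOq j ltjk) dot_mulmx // gram_pq subrr.
Qed.

Lemma spanning_rows_exist N (P : 'rV[R]_N -> Prop) :
  exists k (A : 'M[R]_(k, N)), (forall i, P (row i A)) /\ (forall c, P c -> (c <= A)%MS).
Proof.
suff grow d k (A : 'M[R]_(k, N)) : (N - \rank A <= d)%N -> (forall i, P (row i A)) ->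
    exists k (A : 'M[R]_(k, N)), (forall i, P (row i A)) /\ (forall c, P c -> (c <= A)%MS).
  by apply: (grow N 0%N 0) => [|[]//]; apply: leq_subr.
elim: d k A => [|d IH] k A rkA PA.
  exists k, A; split=> // c _; apply: submx_full.
  by rewrite /row_full eqn_leq rank_leq_col -subn_eq0 -leqn0.
have [spanA|] := classic (forall c, P c -> (c <= A)%MS); first by exists k, A.
move=> nspan; have [c nc] := not_all_ex_not _ _ nspan.
have [Pc notAc] := imply_to_and _ _ nc.
apply: (IH (k + 1)%N (col_mx A c)).
  have ltAc : (A < col_mx A c)%MS.
    rewrite ltmxE -addsmxE addsmxSl /=; apply: contra_notN notAc.
    by apply: submx_trans; rewrite -addsmxE addsmxSr.
  by move: rkA (rank_ltmx ltAc) (rank_leq_col (col_mx A c)); lia.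
move=> i; have [j ->|j ->] := split_ordP i; first by rewrite rowKu.
by rewrite rowKd (ord1 j) row_id.
Qed.

Lemma submx_kermx_trmx k r (M : 'M[R]_(k, r)) p (D : 'M[R]_(p, r)) :
  kermx M^T *m D^T = 0 -> (D <= M)%MS.
Proof.
set K := kermx M^T => KD0.
have mul_trC a b c (X : 'M[R]_(a, b)) (Y : 'M[R]_(c, b)) : X *m Y^T = 0 -> Y *m X^T = 0.
  by move=> XY0; rewrite -[Y]trmxK -trmx_mul XY0 trmx0.
have sDK : (D <= kermx K^T)%MS by apply/sub_kermxP/mul_trC.
have sMK : (M <= kermx K^T)%MS by apply/sub_kermxP/mul_trC/mulmx_ker.
have rkMK : \rank M = \rank (kermx K^T).
  rewrite mxrank_ker mxrank_tr mxrank_ker mxrank_tr.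
  by move: (rank_leq_col M); lia.
have := (mxrank_leqif_eq sMK).2; rewrite rkMK eqxx => /esym/andP[_ sKM].
exact: submx_trans sDK sKM.
Qed.

(* Polarization turns the equal norms into equal Gram matrices on the kernel of [M^T],
   and Witt's theorem provides [O]. *)
Lemma orthogonal_glue k r N (Lam Mu : 'M[R]_(r, N)) (M : 'M[R]_(k, N)) :
  (forall x, x *m M^T = 0 -> dot (x *m Lam^T) (x *m Lam^T) = dot (x *m Mu^T) (x *m Mu^T)) ->
  exists O : 'M[R]_r, O *m O^T = 1%:M /\ (Lam - O *m Mu <= M)%MS.
Proof.
move=> norm_eq; pose K := kermx M^T.
have KM0 j : row j K *m M^T = 0 by rewrite -row_mul mulmx_ker row0.
have [|O [orthoO KLO]] := @gram_eq_orthogonal _ _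
    (fun j => row j K *m Lam^T) (fun j => row j K *m Mu^T).
  move=> i j; rewrite [LHS]dot_polar [RHS]dot_polar -!mulmxDl !norm_eq //.
  by rewrite mulmxDl !KM0 addr0.
exists O; split=> //; apply: submx_kermx_trmx.
have KLO' : K *m Lam^T *m O = K *m Mu^T.
  by apply/row_matrixP => j; move: (KLO j); rewrite -!row_mul.
by rewrite linearB /= mulmxBr trmx_mul mulmxA -KLO' -!mulmxA orthoO mulmx1 subrr.
Qed.
End InnerProduct.

Lemma sumsq_orthogonal (F : comPzRingType) (S : comPzRingType) (f : {rmorphism F -> S})
    r (O : 'M[F]_r) (m : 'I_r -> S) :
  O *m O^T = 1%:M -> \sum_i (\sum_k f (O i k) * m k) ^+ 2 = \sum_k m k ^+ 2.
Proof.
move=> /mulmx1C orthoO.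
have expand i : (\sum_k f (O i k) * m k) ^+ 2 =
    \sum_k \sum_k' f (O i k * O i k') * (m k * m k').
  rewrite expr2 mulr_suml; apply: eq_bigr => k _.
  by rewrite mulr_sumr; apply: eq_bigr => k' _; rewrite rmorphM; ring.
rewrite (eq_bigr _ (fun i _ => expand i)) exchange_big /=; apply: eq_bigr => k _.
have gram k' : \sum_i f (O i k * O i k') = f (1%:M k k').
  by rewrite -orthoO mxE -rmorph_sum; apply/congr1/eq_bigr => i _; rewrite mxE.
rewrite exchange_big /= (eq_bigr (fun k' => f (k == k')%:R * (m k * m k'))) => [|k' _].
  rewrite (bigD1 k) //= eqxx rmorph1 mul1r expr2 big1 ?addr0 // => k' neq_k'k.
  by rewrite eq_sym (negbTE neq_k'k) rmorph0 mul0r.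
by rewrite -mulr_suml gram mxE.
Qed.

Section LinearForms.
Variables (R : rcfType) (n : nat).
Local Notation N := n.+1.
Local Notation S := (mpoly R N).

Definition lform (c : 'rV[R]_N) : S := \sum_(j < N) mpolyC N (c 0 j) * mvar N j.

Fact lform_is_zmod_morphism : zmod_morphism lform.
Proof.
move=> c d; rewrite /lform -sumrB; apply: eq_bigr => j _.
by rewrite !mxE rmorphB mulrBl.
Qed.
HB.instance Definition _ := GRing.isZmodMorphism.Build 'rV[R]_N S lform lform_is_zmod_morphism.

Lemma lformZ a c : lform (a *: c) = mpolyC N a * lform c.
Proof. by rewrite /lform mulr_sumr; apply: eq_bigr => j _; rewrite mxE rmorphM mulrA. Qed.

Lemma lform_mulmx k (w : 'rV[R]_k) (A : 'M[R]_(k, N)) :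
  lform (w *m A) = \sum_i mpolyC N (w 0 i) * lform (row i A).
Proof. by rewrite mulmx_sum_row raddf_sum; apply: eq_bigr => i _; apply: lformZ. Qed.

Lemma lform_linform c : lform c = linform N (fun j => c 0 (inord j)).
Proof. by apply: eq_bigr => j _; rewrite inord_val. Qed.

Lemma homog_lform c : homog 1 (lform c).
Proof. by rewrite lform_linform homog_linform. Qed.

Lemma homog1_lform (l : S) : homog 1 l -> exists c, l = lform c.
Proof.
move=> /homog1P[c ->]; exists (\row_(j < N) c j); rewrite lform_linform.
by apply: eq_bigr => j _; rewrite mxE inord_val.
Qed.

Lemma homog1_rows k (l : 'I_k -> S) :
  (forall i, homog 1 (l i)) -> exists A : 'M[R]_(k, N), forall i, l i = lform (row i A).
Proof.
move=> hl; have [c eq_l] := fin_all_exists (fun i => homog1_lform (hl i)).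
by exists (\matrix_i c i) => i; rewrite rowK.
Qed.

Definition evalr (x : 'rV[R]_N) : {rmorphism S -> R} := meval N (fun j => x 0 (inord j)).

Lemma evalr_lform x c : evalr x (lform c) = dot c x.
Proof.
rewrite lform_linform meval_linform dotE.
by apply: eq_bigr => j _; rewrite inord_val.
Qed.

Lemma evalr_sumsq k x (A : 'M[R]_(k, N)) :
  evalr x (\sum_i lform (row i A) ^+ 2) = dot (x *m A^T) (x *m A^T).
Proof.
rewrite rmorph_sum dotE; apply: eq_bigr => i _.
by rewrite rmorphXn evalr_lform dot_row_trmx expr2.
Qed.

Lemma evalr_mvarX x (j : 'I_N) e : evalr x ((mvar N j : S) ^+ e) = x 0 j ^+ e.
Proof. by rewrite rmorphXn /evalr meval_mvar // inord_val. Qed.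

End LinearForms.

Section Gluing.
Variables (R : rcfType) (n : nat).
Local Notation N := n.+1.
Local Notation S := (mpoly R N).

Lemma ideal_bigsum (I : S -> Prop) k (f : 'I_k -> S) :
  is_ideal I -> (forall i, I (f i)) -> I (\sum_i f i).
Proof. by move=> [I0 ID _] If; elim/big_rec: _ => // i x _ Ix; apply: ID. Qed.

Lemma idealMl (I : S -> Prop) a b : is_ideal I -> I b -> I (a * b).
Proof. by case=> _ _; apply. Qed.

Lemma idealN (I : S -> Prop) a : is_ideal I -> I a -> I (- a).
Proof. by move=> hI Ia; rewrite -mulN1r; apply: idealMl. Qed.

Lemma idealB (I : S -> Prop) a b : is_ideal I -> I a -> I b -> I (a - b).
Proof. by move=> hI Ia Ib; case: (hI) => _ ID _; apply: ID => //; apply: idealN. Qed.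

Lemma ideal_sumsq_congr (I : S -> Prop) k (a b : 'I_k -> S) q : is_ideal I ->
  (forall i, I (a i - b i)) -> I (q - \sum_i b i ^+ 2) -> I (q - \sum_i a i ^+ 2).
Proof.
move=> hI Iab Iqb.
have diff_sq : \sum_i (a i + b i) * (a i - b i) = \sum_i a i ^+ 2 - \sum_i b i ^+ 2.
  by rewrite -sumrB; apply: eq_bigr => i _; ring.
have -> : q - \sum_i a i ^+ 2 = (q - \sum_i b i ^+ 2) - \sum_i (a i + b i) * (a i - b i).
  by rewrite diff_sq; ring.
by apply: idealB => //; apply: ideal_bigsum => // i; apply: idealMl.
Qed.

Lemma ideal_lform_span (I : S -> Prop) : is_ideal I ->
  exists k (A : 'M[R]_(k, N)), forall c, I (lform c) <-> (c <= A)%MS.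
Proof.
move=> hI; have [k [A [IA spanA]]] := spanning_rows_exist (fun c => I (lform c)).
exists k, A => c; split=> [|/submxP[w ->]]; first exact: spanA.
by rewrite lform_mulmx; apply: ideal_bigsum => // i; apply: idealMl.
Qed.

(* Some power of a coordinate that is nonzero at [x] kills [f] modulo [L]. *)
Lemma evalr_saturation_gen_eq0 (L : S -> Prop) x f : x != 0 ->
  (forall l, L l -> evalr x l = 0) -> saturation (ideal_gen L) f -> evalr x f = 0.
Proof.
move=> /rV0Pn[j xj_neq0] Lx0 [k satf].
have [m [a [b [Lb eq_f]]]] := satf _ (@homog_mvarX R N j k (ltn_ord j)).
have : evalr x (mvar N j ^+ k * f) = 0.
  by rewrite eq_f rmorph_sum big1 // => i _; rewrite rmorphM (Lx0 _ (Lb i)) mulr0.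
rewrite rmorphM evalr_mvarX => /eqP.
by rewrite mulf_eq0 expf_eq0 (negbTE xj_neq0) andbF => /eqP.
Qed.

Variables IX IY : S -> Prop.
Hypotheses (idealX : is_ideal IX) (idealY : is_ideal IY).
Hypothesis cap_sat :
  forall f, saturation (ideal_sum IX IY) f -> saturation (span_cap_ideal IX IY) f.

(* On Span(X) cap Span(Y) = X cap Y both sums of squares equal [q]. *)
Lemma sumsq_eq_on_span_cap q k (Lam Mu : 'M[R]_(k, N))
    kX kY (AX : 'M[R]_(kX, N)) (AY : 'M[R]_(kY, N)) :
  (forall c, IX (lform c) -> (c <= AX)%MS) -> (forall c, IY (lform c) -> (c <= AY)%MS) ->
  IX (q - \sum_i lform (row i Lam) ^+ 2) -> IY (q - \sum_i lform (row i Mu) ^+ 2) ->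
  forall x, x *m (AX + AY)%MS^T = 0 ->
    dot (x *m Lam^T) (x *m Lam^T) = dot (x *m Mu^T) (x *m Mu^T).
Proof.
move=> spanX spanY Xq Yq x xA0.
have [->|x_neq0] := eqVneq x 0; first by rewrite !mul0mx.
apply/eqP; rewrite -subr_eq0 -!evalr_sumsq -rmorphB; apply/eqP.
apply: (evalr_saturation_gen_eq0 x_neq0) (cap_sat _) => [l [XYl /homog1_lform[c eq_l]]|].
  rewrite eq_l evalr_lform; apply: (dot_trmx_eq0 xA0).
  move: XYl; rewrite eq_l => -[/spanX|/spanY] sc; apply: submx_trans sc _.
    exact: addsmxSl.
  exact: addsmxSr.
exists 0%N => g _.
exists (- (g * (q - \sum_i lform (row i Lam) ^+ 2))), (g * (q - \sum_i lform (row i Mu) ^+ 2)).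
by split; [apply: idealN => //; apply: idealMl | apply: idealMl | ring].
Qed.

Lemma sos_linear_mod_union r q :
  sos_linear_mod IX r q -> sos_linear_mod IY r q -> sos_linear_mod (fun g => IX g /\ IY g) r q.
Proof.
move=> [l [hl Xq]] [m [hm Yq]].
have [Lam eq_l] := homog1_rows hl; have [Mu eq_m] := homog1_rows hm.
have {}Xq : IX (q - \sum_i lform (row i Lam) ^+ 2) by under eq_bigr do rewrite -eq_l.
have {}Yq : IY (q - \sum_i lform (row i Mu) ^+ 2) by under eq_bigr do rewrite -eq_m.
have [kX [AX spanX]] := ideal_lform_span idealX.
have [kY [AY spanY]] := ideal_lform_span idealY.
have [|O [orthoO /sub_addsmxP[[WX WY] /= eq_glue]]] :=
    @orthogonal_glue _ _ _ _ Lam Mu (AX + AY)%MS.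
  exact: (sumsq_eq_on_span_cap (fun c => (spanX c).1) (fun c => (spanY c).1) Xq Yq).
exists (fun i => lform (row i (Lam - WX *m AX))); split=> [i|]; first exact: homog_lform.
split.
  apply: ideal_sumsq_congr Xq => // i; rewrite -raddfB; apply/spanX.
  by rewrite linearB /= addrAC subrr add0r eqmx_opp row_mul submxMl.
have -> : Lam - WX *m AX = O *m Mu + WY *m AY.
  move/eqP: eq_glue; rewrite subr_eq => /eqP ->.
  by rewrite addrAC [WX *m AX + _]addrC addrK addrC.
apply: (ideal_sumsq_congr (b := fun i => lform (row i (O *m Mu)))) => // [i|].
  by rewrite -raddfB; apply/spanY; rewrite linearD /= addrC addKr row_mul submxMl.
suff -> : \sum_i lform (row i (O *m Mu)) ^+ 2 = \sum_i lform (row i Mu) ^+ 2 by [].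
rewrite -(sumsq_orthogonal (mpolyC N) (fun k => lform (row k Mu)) orthoO).
apply: eq_bigr => i _; rewrite row_mul lform_mulmx; congr (_ ^+ 2).
by apply: eq_bigr => k _; rewrite mxE.
Qed.

End Gluing.

Theorem theorem5p2 (R : rcfType) (n r : nat) (IX IY : mpoly R n.+1 -> Prop)
    (hX : is_scheme_ideal IX) (hY : is_scheme_ideal IY)
    (hcap : forall f, saturation (ideal_sum IX IY) f <->
                      saturation (span_cap_ideal IX IY) f)
    (q : mpoly R n.+1) (hq : homog 2 q)
    (hfX : sos_linear_mod IX r q) (hfY : sos_linear_mod IY r q) :
  sos_linear_mod (fun g => IX g /\ IY g) r q.
Proof.
have [[idealX _] _] := hX; have [[idealY _] _] := hY.
exact: (sos_linear_mod_union idealX idealY (fun f => (hcap f).1) hfX hfY).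
Qed.
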